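(* Let $\mathcal{M}$ be an episodic MDP with rewards in $[0,1]$, known transitions, and expert policy $\pi^{\operatorname{E}}$. Let $\widetilde d_h:\mathcal{S}\times\mathcal{A}\to\mathbb{R}$, $h\in[H]$, satisfy $\sum_{h=1}^H\|\widetilde d_h-d_h^{\pi^{\operatorname{E}}}\|_1\le\varepsilon_{\operatorname{EST}}$, and let $\bar\pi$ satisfy $\sum_{h=1}^H\|d_h^{\bar\pi}-\widetilde d_h\|_1\le\min_{\pi\in\Pi}\sum_{h=1}^H\|d_h^\pi-\widetilde d_h\|_1+\varepsilon_{\mathrm{opt}}$. Then $V^{\pi^{\operatorname{E}}}-V^{\bar\pi}\le\varepsilon_{\mathrm{opt}}+2\varepsilon_{\operatorname{EST}}$.
   Context: Episodic MDP $(\mathcal{S},\mathcal{A},P,r,H,\rho)$ with finite $\mathcal{S},\mathcal{A}$, rewards $r_h:\mathcal{S}\times\mathcal{A}\to[0,1]$. $\Pi$ is the set of non-stationary policies $\pi_h:\mathcal{S}\to\Delta(\mathcal{A})$; $d_h^\pi(s,a)$ is the probability that $(s_h,a_h)=(s,a)$ under $\pi$ in $\mathcal{M}$; $V^\pi=\sum_{h}\sum_{(s,a)}d_h^\pi(s,a)r_h(s,a)$; $\|\cdot\|_1$ is the $\ell_1$ norm over $\mathcal{S}\times\mathcal{A}$. *)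

From mathcomp Require Import all_boot all_order all_algebra.
Set Implicit Arguments. Unset Strict Implicit. Unset Printing Implicit Defensive.
Import Order.TTheory GRing.Theory Num.Theory.
Local Open Scope ring_scope.

(* Steps are indexed h = 0, ..., H-1 (paper: h = 1, ..., H).
   P h s a s' = P_h(s' | s, a); pi h s a = pi_h(a | s); rho s = initial prob. *)

Definition is_distr (R : numDomainType) (T : finType) (p : T -> R) : Prop :=
  (forall x, 0 <= p x) /\ \sum_(x : T) p x = 1.

Definition is_transition (R : numDomainType) (S A : finType) (H : nat)
  (P : nat -> S -> A -> S -> R) : Prop :=
  forall h, (h < H)%N -> forall s a, is_distr (P h s a).

(* Membership in Pi: non-stationary (possibly randomized) Markov policies. *)
Definition is_policy (R : numDomainType) (S A : finType) (H : nat)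
  (pi : nat -> S -> A -> R) : Prop :=
  forall h, (h < H)%N -> forall s, is_distr (pi h s).

Fixpoint state_dist (R : numDomainType) (S A : finType) (rho : S -> R)
  (P : nat -> S -> A -> S -> R) (pi : nat -> S -> A -> R) (h : nat) : S -> R :=
  match h with
  | 0 => rho
  | h'.+1 => fun s' => \sum_(s : S) \sum_(a : A)
                state_dist rho P pi h' s * pi h' s a * P h' s a s'
  end.

(* occupancy measure d_h^pi(s,a) = Pr(s_h = s, a_h = a) *)
Definition occ (R : numDomainType) (S A : finType) (rho : S -> R)
  (P : nat -> S -> A -> S -> R) (pi : nat -> S -> A -> R) (h : nat)
  (s : S) (a : A) : R :=
  state_dist rho P pi h s * pi h s a.

Definition value (R : numDomainType) (S A : finType) (H : nat) (rho : S -> R)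
  (P : nat -> S -> A -> S -> R) (r : nat -> S -> A -> R)
  (pi : nat -> S -> A -> R) : R :=
  \sum_(h < H) \sum_(s : S) \sum_(a : A) occ rho P pi h s a * r h s a.

Definition l1dist (R : numDomainType) (S A : finType) (d d' : S -> A -> R) : R :=
  \sum_(s : S) \sum_(a : A) `|d s a - d' s a|.

Definition occ_dist (R : numDomainType) (S A : finType) (H : nat) (rho : S -> R)
  (P : nat -> S -> A -> S -> R) (pi : nat -> S -> A -> R)
  (dt : nat -> S -> A -> R) : R :=
  \sum_(h < H) l1dist (occ rho P pi h) (dt h).

(** The value is linear in the occupancy measures and rewards lie in [0, 1],
    so the value gap of two policies is at most the summed l1 distance of
    their occupancy measures.  By the triangle inequality through the
    estimate [dt], that distance is at most the estimation error plus the
    distance from [pibar] to [dt]; near-optimality of [pibar], tested against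
    the expert itself, bounds the latter by [eps_opt] plus the estimation
    error once more. *)
From mathcomp Require Import all_boot all_order all_algebra.
From mathcomp Require Import lra.
Set Implicit Arguments. Unset Strict Implicit. Unset Printing Implicit Defensive.
Import Order.TTheory GRing.Theory Num.Theory.
Local Open Scope ring_scope.

Section L1Distance.

Variables (R : realDomainType) (S A : finType).
Implicit Types (d e f : S -> A -> R).

Lemma l1distC d e : l1dist d e = l1dist e d.
Proof. by apply: eq_bigr => s _; apply: eq_bigr => a _; rewrite distrC. Qed.

Lemma l1dist_triangle d e f :
  l1dist d f <= l1dist d e + l1dist e f.
Proof.
rewrite /l1dist -big_split /=; apply: ler_sum => s _.
rewrite -big_split /=; apply: ler_sum => a _.
by rewrite -(subrKA (e s a)) ler_normD.
Qed.

Lemma pairing_diff_le_l1dist d e f :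
  (forall s a, `|f s a| <= 1) ->
  \sum_s \sum_a d s a * f s a - \sum_s \sum_a e s a * f s a <= l1dist d e.
Proof.
move=> f_le1; rewrite -sumrB; apply: ler_sum => s _.
rewrite -sumrB; apply: ler_sum => a _.
rewrite -mulrBl (le_trans (real_ler_norm _)) ?num_real // normrM.
by rewrite ler_piMr.
Qed.

End L1Distance.

Lemma value_diff_le_occ_l1dist (R : realDomainType) (S A : finType) (H : nat)
    (rho : S -> R) (P : nat -> S -> A -> S -> R) (r : nat -> S -> A -> R)
    (pi pi' : nat -> S -> A -> R) :
  (forall h, (h < H)%N -> forall s a, `|r h s a| <= 1) ->
  value H rho P r pi - value H rho P r pi' <=
  \sum_(h < H) l1dist (occ rho P pi h) (occ rho P pi' h).
Proof.
move=> r_le1; rewrite /value -sumrB; apply: ler_sum => h _.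
exact: pairing_diff_le_l1dist (r_le1 h (ltn_ord h)).
Qed.

Theorem lemma1 (R : realFieldType) (S A : finType) (H : nat)
  (rho : S -> R) (P : nat -> S -> A -> S -> R) (r : nat -> S -> A -> R)
  (piE pibar : nat -> S -> A -> R) (dt : nat -> S -> A -> R)
  (eps_est eps_opt : R) :
  is_distr rho ->
  is_transition H P ->
  (forall h, (h < H)%N -> forall s a, 0 <= r h s a <= 1) ->
  is_policy H piE ->
  is_policy H pibar ->
  \sum_(h < H) l1dist (dt h) (occ rho P piE h) <= eps_est ->
  (forall pi, is_policy H pi ->
     occ_dist H rho P pibar dt <= occ_dist H rho P pi dt + eps_opt) ->
  value H rho P r piE - value H rho P r pibar <= eps_opt + 2 * eps_est.
Proof.
move=> _ _ r01 piE_policy _ est_le opt_le.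
have r_le1 h (hH : (h < H)%N) s a : `|r h s a| <= 1.
  by have /andP[r0 r1] := r01 h hH s a; rewrite ger0_norm.
have expert_dist : occ_dist H rho P piE dt =
                   \sum_(h < H) l1dist (dt h) (occ rho P piE h).
  by apply: eq_bigr => h _; rewrite l1distC.
have pibar_near := opt_le _ piE_policy; rewrite expert_dist in pibar_near.
have via_dt : \sum_(h < H) l1dist (occ rho P piE h) (occ rho P pibar h) <=
    \sum_(h < H) l1dist (dt h) (occ rho P piE h) + occ_dist H rho P pibar dt.
  rewrite -big_split /=; apply: ler_sum => h _.
  rewrite (l1distC (dt h)) [l1dist (occ _ _ pibar h) _]l1distC.
  exact: l1dist_triangle.
have := value_diff_le_occ_l1dist rho P piE pibar r_le1.
lra.
Qed.
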